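(* Let $\Omega_n=\{1,2,\dots,n\}$, let $C_2,C_3,\dots,C_n$ be positive numbers, and let $\mu:2^{\Omega_n}\to[0,+\infty)$ satisfy \[ \mu(A)\leqslant\frac{1}{|A|}\sum_{k\in A}\mu(\{k\})+\frac{C_{|A|}}{|A|}\sum_{k\in A}\mu(\{k\})\,\mu(A\setminus\{k\}) \] for all $A\subset\Omega_n$ with $|A|\geqslant2$. Then for every nonempty $A\subset\Omega_n$, \[ \mu(A)\leqslant\frac{1}{|A|}\sum_{k\in A}\mu(\{k\})+\sum_{k=2}^{|A|}C_{|A|}C_{|A|-1}\cdots C_{|A|-k+2}\left(\frac{1}{|A|}\sum_{j\in A}\mu(\{j\})\right)^k. \] *)

From mathcomp Require Import all_boot all_order all_algebra.
Set Implicit Arguments. Unset Strict Implicit. Unset Printing Implicit Defensive.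

From mathcomp Require Import all_boot all_order all_algebra.
From mathcomp Require Import ring zify.
Import Order.TTheory GRing.Theory Num.Theory.
Local Open Scope ring_scope.

(* Let F_m(t) = bound_poly C m t
   = sum_(k=1..m) C_m C_(m-1) ... C_(m-k+2) t^k, so that
   F_(m+2)(t) = t + C_(m+2) t F_(m+1)(t) and the claim reads mu(A) <= F_|A|(a),
   a the mean of the mu({k}) over A.  The mean over A\{k} is
   b_k = (|A| a - mu({k})) / (|A| - 1), so the hypothesis on mu and the
   induction hypothesis reduce the claim to
   sum_k mu({k}) b_k^j <= |A| a^(j+1) for 1 <= j < |A|.
   With p = |A| - 1 and mu({k}) = (p+1) a - p b_k, each summand is at most
   a^(j+1) + (p-j) a^j (a - b_k) (weighted AM-GM and monotonicity of t^j), and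
   the linear terms cancel because sum_k b_k = (p+1) a. *)

Section PowerInequalities.
Variables (R : realFieldType) (a b : R).
Hypotheses (a_ge0 : 0 <= a) (b_ge0 : 0 <= b).

Lemma weighted_amgm j : j.+1%:R * a * b ^+ j <= a ^+ j.+1 + j%:R * b ^+ j.+1.
Proof.
rewrite -subr_ge0; elim: j => [|j IHj].
  by rewrite expr0 expr1 mulr1 mul1r mul0r addr0 subrr.
have -> : a ^+ j.+2 + j.+1%:R * b ^+ j.+2 - j.+2%:R * a * b ^+ j.+1
    = a * (a ^+ j.+1 + j%:R * b ^+ j.+1 - j.+1%:R * a * b ^+ j)
      + j.+1%:R * b ^+ j * (a - b) ^+ 2.
  by rewrite !exprS -!natr1; ring.
by apply: addr_ge0; apply: mulr_ge0; rewrite ?sqr_ge0 ?mulr_ge0 ?exprn_ge0.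
Qed.

Lemma subr_mulXX_ge0 j : 0 <= (a - b) * (a ^+ j - b ^+ j).
Proof.
rewrite subrXX mulrA -expr2 mulr_ge0 ?sqr_ge0 //.
by apply: sumr_ge0 => i _; rewrite mulr_ge0 ?exprn_ge0.
Qed.

Lemma tangent_pow_bound p j : (j <= p)%N ->
  (p.+1%:R * a - p%:R * b) * b ^+ j <= a ^+ j.+1 + (p - j)%:R * a ^+ j * (a - b).
Proof.
move=> le_jp; rewrite -subr_ge0.
have -> : a ^+ j.+1 + (p - j)%:R * a ^+ j * (a - b) - (p.+1%:R * a - p%:R * b) * b ^+ j
    = (a ^+ j.+1 + j%:R * b ^+ j.+1 - j.+1%:R * a * b ^+ j)
      + (p - j)%:R * ((a - b) * (a ^+ j - b ^+ j)).
  by rewrite natrB // !exprS -!natr1; ring.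
by apply: addr_ge0; [rewrite subr_ge0 weighted_amgm | rewrite mulr_ge0 ?subr_mulXX_ge0].
Qed.

End PowerInequalities.

Definition set_mean {R : realFieldType} {I : finType} (y : I -> R) (A : {set I}) : R :=
  #|A|%:R^-1 * \sum_(k in A) y k.

Section LeaveOneOutMeans.
Variables (R : realFieldType) (I : finType) (A : {set I}) (p : nat) (y : I -> R).
Hypotheses (cardA : #|A| = p.+2) (y_ge0 : forall k, k \in A -> 0 <= y k).

Let s := \sum_(k in A) y k.
Let a := set_mean y A.
Let b k := set_mean y (A :\ k).

Let mean_ge0 (B : {set I}) : B \subset A -> 0 <= set_mean y B.
Proof.
move=> /subsetP sBA; rewrite mulr_ge0 ?invr_ge0 ?ler0n //.
by apply: sumr_ge0 => k /sBA; apply: y_ge0.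
Qed.

Let a_def : a = p.+2%:R^-1 * s.
Proof. by rewrite /a /set_mean cardA. Qed.

Let b_def k : k \in A -> b k = p.+1%:R^-1 * (s - y k).
Proof.
move=> kA; have := cardsD1 k A; rewrite kA cardA add1n => -[cardD1].
by rewrite /b /set_mean cardD1 /s (big_setD1 k kA) /= addrAC subrr add0r.
Qed.

Let y_tangent k : k \in A -> y k = p.+2%:R * a - p.+1%:R * b k.
Proof. by move=> kA; rewrite a_def b_def // !mulVKf ?pnatr_eq0 // opprB addrC subrK. Qed.

Let sum_b : \sum_(k in A) b k = p.+2%:R * a.
Proof.
rewrite (eq_bigr _ b_def) a_def mulVKf ?pnatr_eq0 // -mulr_sumr sumrB sumr_const cardA.
by rewrite mulrSr addrK -[s *+ _]mulr_natl mulKf ?pnatr_eq0.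
Qed.

Lemma sum_mul_leave_one_out_pow j : (j <= p.+1)%N ->
  \sum_(k in A) y k * set_mean y (A :\ k) ^+ j <= p.+2%:R * set_mean y A ^+ j.+1.
Proof.
move=> le_jp; rewrite -/a.
apply: le_trans (_ : \sum_(k in A) (a ^+ j.+1 + (p.+1 - j)%:R * a ^+ j * (a - b k)) <= _).
  by apply: ler_sum => k kA; rewrite y_tangent // tangent_pow_bound ?mean_ge0 ?subD1set.
rewrite big_split /= -mulr_sumr sumrB sum_b !sumr_const cardA.
by rewrite -[a *+ _]mulr_natl subrr mulr0 addr0 mulr_natl.
Qed.

Lemma sum_mul_leave_one_out_poly l (c : nat -> R) :
    (forall j, (l <= j <= p.+1)%N -> 0 <= c j) ->
  \sum_(k in A) y k * \sum_(l <= j < p.+2) c j * set_mean y (A :\ k) ^+ j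
    <= p.+2%:R * set_mean y A * \sum_(l <= j < p.+2) c j * set_mean y A ^+ j.
Proof.
move=> c_ge0; under eq_bigr do rewrite mulr_sumr.
rewrite exchange_big mulr_sumr /=; apply: ler_sum_nat => j /andP[le_lj lt_jp].
under eq_bigr do rewrite mulrCA; rewrite -mulr_sumr.
have le_jp : (j <= p.+1)%N by rewrite -ltnS.
rewrite mulrCA -mulrA -exprS ler_wpM2l ?c_ge0 ?le_lj //.
exact: sum_mul_leave_one_out_pow.
Qed.

End LeaveOneOutMeans.

Definition bound_poly {R : realFieldType} (C : nat -> R) (m : nat) (t : R) : R :=
  \sum_(1 <= k < m.+1) (\prod_(i < k.-1) C (m - i)%N) * t ^+ k.

Lemma bound_poly1 (R : realFieldType) (C : nat -> R) t : bound_poly C 1 t = t.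
Proof. by rewrite /bound_poly big_nat1 big_ord0 mul1r expr1. Qed.

Lemma bound_poly_split (R : realFieldType) (C : nat -> R) m t : (0 < m)%N ->
  bound_poly C m t = t + \sum_(2 <= k < m.+1) (\prod_(i < k.-1) C (m - i)%N) * t ^+ k.
Proof. by move=> m_gt0; rewrite /bound_poly big_ltn ?ltnS // big_ord0 mul1r expr1. Qed.

Lemma bound_polySS (R : realFieldType) (C : nat -> R) m t :
  bound_poly C m.+2 t = t + C m.+2 * t * bound_poly C m.+1 t.
Proof.
rewrite bound_poly_split // /bound_poly big_add1 /= mulr_sumr; congr (_ + _).
apply: eq_big_nat => -[//|k] _ /=; rewrite big_ord_recl subn0.
rewrite (eq_bigr (fun i : 'I_k => C (m.+1 - i)%N)) => [|//].
by rewrite exprS; ring.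
Qed.

Section Proposition1.
Variables (R : realFieldType) (n : nat) (C : nat -> R) (mu : {set 'I_n} -> R).
Hypotheses (C_gt0 : forall i, (2 <= i <= n)%N -> 0 < C i)
  (mu_ge0 : forall A, 0 <= mu A)
  (mu_rec : forall A : {set 'I_n}, (2 <= #|A|)%N ->
     mu A <= #|A|%:R^-1 * \sum_(k in A) mu [set k]
             + C #|A| / #|A|%:R * \sum_(k in A) mu [set k] * mu (A :\ k)).

Let mean := set_mean (fun k => mu [set k]).

Lemma mu_le_bound_poly A : A != set0 -> mu A <= bound_poly C #|A| (mean A).
Proof.
rewrite -card_gt0; move cardA: #|A| => m; elim: m A cardA => // m IHm A cardA _.
case: m IHm cardA => [_ cardA | m IHm cardA].
  have [x ->] : exists x, A = [set x] by apply/cards1P/eqP.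
  by rewrite bound_poly1 /mean /set_mean cards1 big_set1 invr1 mul1r.
have le_m2n : (m.+2 <= n)%N by rewrite -cardA -[n in (_ <= n)%N]card_ord max_card.
have sum_le : \sum_(k in A) mu [set k] * mu (A :\ k)
    <= m.+2%:R * mean A * bound_poly C m.+1 (mean A).
  apply: le_trans (_ : \sum_(k in A) mu [set k] * bound_poly C m.+1 (mean (A :\ k)) <= _).
    apply: ler_sum => k kA; rewrite ler_wpM2l // IHm //.
    by have := cardsD1 k A; rewrite kA cardA add1n => -[].
  pose c j := \prod_(i < j.-1) C (m.+1 - i)%N.
  have c_ge0 j : (1 <= j <= m.+1)%N -> 0 <= c j.
    move=> /andP[_ le_jm]; apply: prodr_ge0 => i _.
    by apply/ltW/C_gt0; have := ltn_ord i; lia.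
  exact: (@sum_mul_leave_one_out_poly _ _ _ _ _ cardA (fun k _ => mu_ge0 _) 1 c).
apply: le_trans (mu_rec A _) _; first by rewrite cardA.
have mean_def : mean A = m.+2%:R^-1 * \sum_(k in A) mu [set k].
  by rewrite /mean /set_mean cardA.
rewrite cardA -mean_def bound_polySS lerD2l.
have C_div_ge0 : 0 <= C m.+2 / m.+2%:R by rewrite divr_ge0 ?ler0n // ltW ?C_gt0.
apply: le_trans (ler_wpM2l C_div_ge0 sum_le) _.
by rewrite -!mulrA mulKf ?pnatr_eq0.
Qed.

End Proposition1.

Theorem proposition1 (R : realFieldType) (n : nat) (C : nat -> R)
  (mu : {set 'I_n} -> R)
  (hC : forall i : nat, (2 <= i <= n)%N -> 0 < C i)
  (hmu : forall A : {set 'I_n}, 0 <= mu A)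
  (hrec : forall A : {set 'I_n}, (2 <= #|A|)%N ->
     mu A <= (#|A|%:R)^-1 * \sum_(k in A) mu [set k]
             + C #|A| / #|A|%:R * \sum_(k in A) mu [set k] * mu (A :\ k)) :
  forall A : {set 'I_n}, A != set0 ->
    mu A <= (#|A|%:R)^-1 * \sum_(k in A) mu [set k]
            + \sum_(2 <= k < #|A|.+1)
                (\prod_(i < k.-1) C (#|A| - i)%N)
                * ((#|A|%:R)^-1 * \sum_(j in A) mu [set j]) ^+ k.
Proof.
move=> A A_neq0; rewrite -bound_poly_split ?card_gt0 //.
exact: mu_le_bound_poly.
Qed.
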